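(* Let $p$ be a prime and let $A$ and $B$ be nontrivial finite $p$-groups. Define $A_0=A$ and $A_n=A_{n-1}\wr\mathbb{Z}/p\mathbb{Z}$ for $n\ge1$. Then $\psi(A_n,B)\to 0$ as $n\to\infty$.
   Context: For a finite group $G$, the average order is $a(G)=\frac{1}{|G|}\sum_{g\in G}\mathrm{order}(g)$ and $m(G)$ denotes the maximum order of an element of $G$. For $p$-groups $A,B$, $\psi(A,B)=\frac{a(A\wr B)}{m(A)\,a(B)}$. For groups $A,B$, let $K=\prod_{b\in B}A$, on which $B$ acts by $x\cdot(\alpha_b)_b=(\alpha_{x^{-1}b})_b$ for $x\in B$; the wreath product $A\wr B$ is the semidirect product $K\rtimes B$ for this action. *)

From HB Require Import structures.
From mathcomp Require Import all_boot all_order all_algebra all_fingroup.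

Set Implicit Arguments.
Unset Strict Implicit.
Unset Printing Implicit Defensive.

Import GRing.Theory Num.Theory.
Local Open Scope group_scope.

(* K = {ffun B -> A} (the product of copies of A indexed by B), on which B
   acts by (x . f)(b) = f (x^-1 * b); A wr B = K x| B with
   (f, x) * (g, y) = (f * (x . g), x * y). *)

Section Wreath.
Variables (A B : finGroupType).

Definition wreath : Type := ({ffun B -> A} * B)%type.
HB.instance Definition _ := Finite.on wreath.

Definition wr_act (x : B) (g : {ffun B -> A}) : {ffun B -> A} :=
  [ffun b => g (x^-1 * b)].

Definition wr_mul (u v : wreath) : wreath :=
  ([ffun b => u.1 b * wr_act u.2 v.1 b], u.2 * v.2).
Definition wr_one : wreath := ([ffun _ => 1], 1).
Definition wr_inv (u : wreath) : wreath :=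
  ([ffun b => (u.1 (u.2 * b))^-1], u.2^-1).

Lemma wr_mulA : associative wr_mul.
Proof.
move=> [f x] [g y] [h z]; rewrite /wr_mul /wr_act /=; congr (_, _).
  apply/ffunP => b; rewrite !ffunE invMg (@mulgA A) (@mulgA B) //.
exact: (@mulgA B).
Qed.

Lemma wr_mul1 : left_id wr_one wr_mul.
Proof.
move=> [f x]; rewrite /wr_mul /wr_act /=; congr (_, _); last by rewrite mul1g.
by apply/ffunP => b; rewrite !ffunE invg1 !mul1g.
Qed.

Lemma wr_mulV : left_inverse wr_one wr_inv wr_mul.
Proof.
move=> [f x]; rewrite /wr_mul /wr_act /=; congr (_, _); last by rewrite mulVg.
by apply/ffunP => b; rewrite !ffunE invgK mulVg.
Qed.

HB.instance Definition _ := Finite_isGroup.Build wreath wr_mulA wr_mul1 wr_mulV.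

End Wreath.

Fixpoint iter_wreath (p : nat) (A : finGroupType) (n : nat) : finGroupType :=
  match n with
  | 0 => A
  | n'.+1 => wreath (iter_wreath p A n') 'Z_p
  end.

Local Open Scope ring_scope.

Definition avg_order (R : fieldType) (G : finGroupType) : R :=
  (\sum_(g : G) (#[g]%g)%:R) / (#|G|%:R).

Definition max_order (G : finGroupType) : nat := (\max_(g : G) #[g]%g)%N.

Definition psi (R : fieldType) (A B : finGroupType) : R :=
  avg_order R (wreath A B) / ((max_order A)%:R * avg_order R B).

(* Write S(G) and T(G) for the sums of the orders and of the squared orders of
   the elements of G.  For w = (f, x) in G wr B, the power w^#[x] is
   (b |-> P_b, 1), where P_b is the product of the values of f along the
   <x>-orbit of b.  If G is a p-group, the orders of the P_b all divide the
   largest one, so #[w] <= #[x] max_b #[P_b]; for fixed b, the map f |-> P_b is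
   equidistributed on G.  Summing over f and x gives
   |G| S(G wr B) <= |B| |G^B| S(B) S(G), that is psi(G, B) <= |B| a(G)/m(G).
   For B = Z/p the same count with squared orders, together with the facts
   that the P_b are conjugate to each other when x <> 1 and that
   m(G wr Z/p) >= p m(G), gives Q(G wr Z/p) <= c Q(G) for
   Q(G) = T(G) / (|G| m(G)^2) and c = (p + (p - 1) p^2) / p^3 < 1.
   By Cauchy-Schwarz (a(G)/m(G))^2 <= Q(G), hence psi(A_n, B) <= |B| c^(n/2). *)

From HB Require Import structures.
From mathcomp Require Import all_boot all_order all_algebra all_fingroup all_solvable.
From mathcomp Require Import zify ring.

Set Implicit Arguments.
Unset Strict Implicit.
Unset Printing Implicit Defensive.

Lemma card_finGroup_gt0 (G : finGroupType) : 0 < #|G|.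
Proof. by apply/card_gt0P; exists 1%g. Qed.

Lemma card_ffun_finGroup_gt0 (B G : finGroupType) : 0 < #|{ffun B -> G}|.
Proof. by apply/card_gt0P; exists [ffun=> 1%g]. Qed.

Lemma bigmax_expn_le_sum (I : finType) (i0 : I) (F : I -> nat) k :
  (\max_i F i) ^ k <= \sum_i F i ^ k.
Proof.
by rewrite (bigmax_eq_arg i0) // (bigD1 [arg max_(i > i0) F i]) //= leq_addr.
Qed.

Lemma sqr_sum_le_card_sum_sqr (I : finType) (F : I -> nat) :
  (\sum_i F i) ^ 2 <= #|I| * \sum_i F i ^ 2.
Proof.
have sum_sqr2E : 2 * (#|I| * \sum_i F i ^ 2) = \sum_i \sum_j (F i ^ 2 + F j ^ 2).
  under [RHS]eq_bigr do rewrite big_split /= sum_nat_const.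
  by rewrite big_split /= sum_nat_const -big_distrr mul2n -addnn.
rewrite -(leq_pmul2l (isT : 0 < 2)) sum_sqr2E expnS expn1 big_distrl big_distrr /=.
apply: leq_sum => i _; rewrite big_distrr big_distrr /=.
by apply: leq_sum => j _; apply: nat_Cauchy.
Qed.

Lemma pnat_leq_dvdn p m n : prime p -> p.-nat m -> p.-nat n -> m <= n -> m %| n.
Proof.
move=> p_pr /p_natP[i ->] /p_natP[j ->].
by rewrite leq_exp2l ?prime_gt1 // => /dvdn_exp2l.
Qed.

Section GroupFacts.
Local Open Scope group_scope.

Lemma order_mulgC (gT : finGroupType) (u v : gT) : #[u * v] = #[v * u].
Proof. by rewrite -(orderJ _ u) conjgE !mulgA mulVg mul1g. Qed.

Lemma expgV_mul_neq (gT : finGroupType) (x b : gT) (i : nat) :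
  0 < i < #[x] -> x^-1 ^+ i * b != b.
Proof.
case/andP=> i_gt0 lt_i_x; apply/eqP => /(canRL (mulgK b)); rewrite mulgV.
by move/eqP; rewrite -order_dvdn orderV => /(dvdn_leq i_gt0); rewrite leqNgt lt_i_x.
Qed.

End GroupFacts.

Section OrbitProduct.
Local Open Scope group_scope.
Variables (G B : finGroupType).
Implicit Types (f : {ffun B -> G}) (x b : B).

Definition orbit_prod f x (k : nat) b : G := \prod_(i < k) f (x^-1 ^+ i * b).

Lemma orbit_prodSl f x k b :
  orbit_prod f x k.+1 b = f b * orbit_prod f x k (x^-1 * b).
Proof.
rewrite /orbit_prod big_ord_recl /= expg0 mul1g; congr (_ * _).
by apply: eq_bigr => i _; rewrite expgSr mulgA.
Qed.

Lemma orbit_prodSr f x k b :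
  orbit_prod f x k.+1 b = orbit_prod f x k b * f (x^-1 ^+ k * b).
Proof. by rewrite /orbit_prod big_ord_recr. Qed.

Lemma orbit_prod1 f k b : orbit_prod f 1 k b = f b ^+ k.
Proof.
rewrite /orbit_prod; under eq_bigr => i _ do rewrite invg1 expg1n mul1g.
by rewrite prodg_const card_ord.
Qed.

Lemma wr_expg f x k :
  ((f, x) : wreath G B) ^+ k = ([ffun b => orbit_prod f x k b], x ^+ k).
Proof.
elim: k => [|k IHk].
  by congr (_, _); apply/ffunP => b; rewrite !ffunE /orbit_prod big_ord0.
rewrite expgS IHk; congr (_, _); last by rewrite expgS.
by apply/ffunP => b; rewrite /= /wr_act !ffunE orbit_prodSl.
Qed.

Lemma wr_expg_orderM f x k :
  ((f, x) : wreath G B) ^+ (#[x] * k) = ([ffun b => orbit_prod f x #[x] b ^+ k], 1).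
Proof.
rewrite expgM wr_expg expg_order wr_expg expg1n; congr (_, _).
by apply/ffunP => b; rewrite !ffunE orbit_prod1 ffunE.
Qed.

(* The orbit products at [b] and at [x^-1 * b] are cyclic rotations of each
   other, hence conjugate. *)
Lemma order_orbit_prod_shift f x b :
  #[orbit_prod f x #[x] (x^-1 * b)] = #[orbit_prod f x #[x] b].
Proof.
have := expg_order x^-1; rewrite orderV.
case: #[x] (order_gt0 x) => // k _ xk1.
rewrite (orbit_prodSl _ _ _ b) orbit_prodSr mulgA -expgSr xk1 mul1g.
exact: order_mulgC.
Qed.

Definition mul_at b (a : G) f : {ffun B -> G} :=
  [ffun c => if c == b then a * f c else f c].

Lemma mul_at_inj b a : injective (mul_at b a).
Proof.
move=> f g /ffunP eq_fg; apply/ffunP => c; have := eq_fg c; rewrite !ffunE.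
by case: (c == b) => // /mulgI.
Qed.

Lemma orbit_prod_mul_at f x b a :
  orbit_prod (mul_at b a f) x #[x] b = a * orbit_prod f x #[x] b.
Proof.
case: #[x] (order_gt0 x) (@expgV_mul_neq _ x) => // k _ neq_b.
rewrite !orbit_prodSl {1}/mul_at ffunE eqxx -mulgA; congr (_ * (_ * _)).
apply: eq_bigr => i _; rewrite ffunE mulgA -expgSr.
by rewrite (negPf (neq_b _ _ _)) //= ltnS ltn_ord.
Qed.

(* Left translation at the point [b] shows that [f |-> orbit_prod f x #[x] b]
   is equidistributed on [G]. *)
Lemma sum_orbit_prod (F : G -> nat) x b :
  (#|G| * \sum_f F (orbit_prod f x #[x] b) = #|{ffun B -> G}| * \sum_g F g)%N.
Proof.
rewrite -sum_nat_const.
transitivity (\sum_(a : G) \sum_f F (a * orbit_prod f x #[x] b)%g).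
  apply: eq_bigr => a _; rewrite (reindex_inj (@mul_at_inj b a)).
  by apply: eq_bigr => f _; rewrite orbit_prod_mul_at.
rewrite exchange_big -sum_nat_const; apply: eq_bigr => f _.
by rewrite [RHS](reindex_inj (mulIg (orbit_prod f x #[x] b))).
Qed.

Lemma order_wreath_ge f x b :
  #[x] * #[orbit_prod f x #[x] b] <= #[(f, x) : wreath G B].
Proof.
have w_exp := expg_order ((f, x) : wreath G B).
have /dvdnP[k order_w] : #[x] %| #[(f, x) : wreath G B].
  by rewrite order_dvdn; move: w_exp; rewrite wr_expg => -[_ ->].
have k_gt0 : 0 < k.
  by have := order_gt0 ((f, x) : wreath G B); rewrite order_w muln_gt0 => /andP[].
rewrite order_w [(k * _)%N]mulnC leq_pmul2l // dvdn_leq // order_dvdn.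
move: w_exp; rewrite order_w mulnC wr_expg_orderM => -[/ffunP/(_ b)].
by rewrite !ffunE => ->.
Qed.

Lemma order_wreath_le p f x :
  prime p -> p.-group [set: G] ->
  #[(f, x) : wreath G B] <= #[x] * \max_b #[orbit_prod f x #[x] b].
Proof.
move=> p_pr pG; have p_eltG (g : G) : p.-elt g by apply: mem_p_elt pG _; rewrite inE.
have [b0 max_b0] := eq_bigmax (fun b => #[orbit_prod f x #[x] b]) (card_finGroup_gt0 B).
rewrite max_b0 dvdn_leq ?muln_gt0 ?order_gt0 // order_dvdn wr_expg_orderM.
apply/eqP; congr (_, _); apply/ffunP => b; rewrite !ffunE; apply/eqP.
rewrite -order_dvdn (pnat_leq_dvdn p_pr (p_eltG _) (p_eltG _)) //.
by rewrite -max_b0 (leq_bigmax b).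
Qed.

End OrbitProduct.

Section OrderSums.
Local Open Scope group_scope.
Local Open Scope nat_scope.

Definition sum_order (G : finGroupType) : nat := \sum_(g : G) #[g].
Definition sum_order_sq (G : finGroupType) : nat := \sum_(g : G) #[g] ^ 2.

Lemma max_order_gt0 (G : finGroupType) : 0 < max_order G.
Proof. exact: leq_trans (order_gt0 1%g) (leq_bigmax 1%g). Qed.

Lemma sum_order_gt0 (G : finGroupType) : 0 < sum_order G.
Proof. by rewrite /sum_order (bigD1 1%g) //= order1. Qed.

Lemma sum_wreathE (G B : finGroupType) (F : wreath G B -> nat) :
  \sum_(w : wreath G B) F w = \sum_(x : B) \sum_(f : {ffun B -> G}) F (f, x).
Proof. by rewrite exchange_big pair_big; apply: eq_bigr => -[]. Qed.

Variables (G B : finGroupType) (p : nat) (p_pr : prime p) (pG : p.-group [set: G]).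

Lemma sum_order_wreath_fiber_le (x : B) :
  #|G| * \sum_(f : {ffun B -> G}) #[(f, x) : wreath G B]
    <= #[x] * (#|B| * #|{ffun B -> G}| * sum_order G).
Proof.
apply: leq_trans (_ : #|G| * \sum_f (#[x] * \sum_b #[orbit_prod f x #[x] b]) <= _).
  rewrite leq_pmul2l ?card_finGroup_gt0 //; apply: leq_sum => f _.
  apply: leq_trans (order_wreath_le f x p_pr pG) _.
  by rewrite leq_pmul2l ?order_gt0 ?(bigmax_expn_le_sum 1%g _ 1).
rewrite -big_distrr /= [_ * (#[x] * _)]mulnCA leq_pmul2l ?order_gt0 //.
rewrite exchange_big big_distrr /=.
under eq_bigr => b _ do rewrite (sum_orbit_prod (fun g => #[g])).
by rewrite sum_nat_const mulnA.
Qed.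

Lemma sum_order_wreath_le :
  #|G| * sum_order (wreath G B) <= #|B| * #|{ffun B -> G}| * sum_order B * sum_order G.
Proof.
rewrite {1}/sum_order sum_wreathE big_distrr /=.
apply: leq_trans (_ : \sum_x #[x] * (#|B| * #|{ffun B -> G}| * sum_order G) <= _).
  by apply: leq_sum => x _; apply: sum_order_wreath_fiber_le.
by rewrite -big_distrl /= mulnC mulnAC.
Qed.

End OrderSums.

Section WreathZp.
Local Open Scope group_scope.
Local Open Scope nat_scope.
Variables (p : nat) (p_pr : prime p).

Lemma card_Zp_prime : #|'Z_p| = p.
Proof. by rewrite card_ord Zp_cast ?prime_gt1. Qed.

Lemma order_Zp_neq1 (x : 'Z_p) : x != 1%g -> #[x] = p.
Proof.
move=> x_neq1; have := order_dvdG (in_setT x); rewrite cardsT card_Zp_prime.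
case/primeP: p_pr => _ /[apply] /pred2P[x_eq1 | //].
by rewrite -order_eq1 x_eq1 in x_neq1.
Qed.

Lemma pgroup_wreath_Zp (G : finGroupType) :
  p.-group [set: G] -> p.-group [set: wreath G 'Z_p].
Proof.
rewrite /pgroup !cardsT card_prod card_ffun pnatM pnatX card_Zp_prime => ->.
by rewrite pnat_id.
Qed.

Lemma pgroup_iter_wreath (A : finGroupType) n :
  p.-group [set: A] -> p.-group [set: iter_wreath p A n].
Proof. by move=> pA; elim: n => //= n; apply: pgroup_wreath_Zp. Qed.

Variables (G : finGroupType) (pG : p.-group [set: G]).
Implicit Types (f : {ffun 'Z_p -> G}) (x : 'Z_p).

(* A nontrivial [x] generates ['Z_p], so [order_orbit_prod_shift] reaches
   every point. *)
Lemma order_orbit_prod_Zp f x b :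
  x != 1%g -> #[orbit_prod f x #[x] b] = #[orbit_prod f x #[x] 1%g].
Proof.
move=> x_neq1; have /cycleP[i ->] : b \in <[x^-1]>.
  suff -> : <[x^-1]> = [set: 'Z_p] by rewrite inE.
  apply/eqP; rewrite eqEcard subsetT cardsT -orderE orderV.
  by rewrite (order_Zp_neq1 x_neq1) card_Zp_prime leqnn.
elim: i => [|i IHi]; first by rewrite expg0.
by rewrite expgS order_orbit_prod_shift.
Qed.

Lemma sum_order_sq_wreath_fiber1_le :
  #|G| * \sum_f #[(f, 1%g) : wreath G 'Z_p] ^ 2
    <= p * #|{ffun 'Z_p -> G}| * sum_order_sq G.
Proof.
apply: leq_trans (_ : #|G| * \sum_f \sum_b #[orbit_prod f 1%g #[1 : 'Z_p] b] ^ 2 <= _).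
  rewrite leq_pmul2l ?card_finGroup_gt0 //; apply: leq_sum => f _.
  apply: leq_trans (bigmax_expn_le_sum 1%g _ 2); rewrite leq_exp2r //.
  by have := order_wreath_le f 1%g p_pr pG; rewrite order1 mul1n.
rewrite exchange_big big_distrr /=.
under eq_bigr => b _ do rewrite (sum_orbit_prod (fun g => #[g] ^ 2)).
by rewrite sum_nat_const card_Zp_prime mulnA.
Qed.

Lemma sum_order_sq_wreath_fiber_le x :
  x != 1%g ->
  #|G| * \sum_f #[(f, x) : wreath G 'Z_p] ^ 2
    <= p ^ 2 * #|{ffun 'Z_p -> G}| * sum_order_sq G.
Proof.
move=> x_neq1.
apply: leq_trans (_ : #|G| * \sum_f p ^ 2 * #[orbit_prod f x #[x] 1%g] ^ 2 <= _).
  rewrite leq_pmul2l ?card_finGroup_gt0 //; apply: leq_sum => f _.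
  rewrite -expnMn leq_exp2r //; apply: leq_trans (order_wreath_le f x p_pr pG) _.
  rewrite {1}(order_Zp_neq1 x_neq1) leq_pmul2l ?prime_gt0 //.
  by apply/bigmax_leqP => b _; rewrite order_orbit_prod_Zp.
by rewrite -big_distrr /= mulnCA (sum_orbit_prod (fun g => #[g] ^ 2)) mulnA.
Qed.

Lemma sum_order_sq_wreath_le :
  #|G| * sum_order_sq (wreath G 'Z_p)
    <= (p + p.-1 * p ^ 2) * #|{ffun 'Z_p -> G}| * sum_order_sq G.
Proof.
rewrite {1}/sum_order_sq sum_wreathE big_distrr /= (bigD1 1%g) //=.
set K := #|{ffun 'Z_p -> G}|.
apply: leq_trans (_ : p * K * sum_order_sq G
  + \sum_(x : 'Z_p | x != 1%g) p ^ 2 * K * sum_order_sq G <= _).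
  rewrite leq_add ?sum_order_sq_wreath_fiber1_le // leq_sum // => x.
  exact: sum_order_sq_wreath_fiber_le.
by rewrite sum_nat_const cardC1 card_Zp_prime !mulnDl !mulnA leqnn.
Qed.

Lemma max_order_wreath_Zp_ge : p * max_order G <= max_order (wreath G 'Z_p).
Proof.
have [g max_g] := eq_bigmax (fun g : G => #[g]) (card_finGroup_gt0 G).
pose x : 'Z_p := Zp1; pose f := mul_at (1 : 'Z_p) g [ffun=> 1%g].
have orbit_prod_f : orbit_prod f x #[x] 1%g = g.
  by rewrite orbit_prod_mul_at /orbit_prod big1 ?mulg1 // => i _; rewrite ffunE.
rewrite /max_order max_g; apply: leq_trans (leq_bigmax ((f, x) : wreath G 'Z_p)).
have order_x : #[x] = p by rewrite order_Zp1 Zp_cast ?prime_gt1.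
by have := order_wreath_ge f x 1%g; rewrite orbit_prod_f order_x.
Qed.

End WreathZp.

Import Order.TTheory GRing.Theory Num.Theory.
Local Open Scope ring_scope.

Lemma ler_nat_frac (R : numFieldType) (a b c d : nat) :
  (0 < b)%N -> (0 < d)%N -> (a * d <= c * b)%N -> a%:R / b%:R <= c%:R / d%:R :> R.
Proof.
move=> b_gt0 d_gt0 le_ad_cb.
by rewrite ler_pdivrMr ?ltr0n // mulrAC ler_pdivlMr ?ltr0n // -!natrM ler_nat.
Qed.

Section Ratios.
Variable R : numFieldType.

Definition order_ratio (G : finGroupType) : R :=
  (sum_order G)%:R / (#|G| * max_order G)%:R.

Definition order_sq_ratio (G : finGroupType) : R :=
  (sum_order_sq G)%:R / (#|G| * max_order G ^ 2)%:R.

Lemma avg_orderE (G : finGroupType) : avg_order R G = (sum_order G)%:R / #|G|%:R.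
Proof. by rewrite /avg_order /sum_order natr_sum. Qed.

Lemma psiE (G B : finGroupType) :
  psi R G B = (sum_order (wreath G B))%:R
              / (#|{ffun B -> G}| * max_order G * sum_order B)%:R.
Proof.
rewrite /psi !avg_orderE card_prod !natrM; field.
rewrite !pnatr_eq0 -!lt0n card_ffun_finGroup_gt0 card_finGroup_gt0.
by rewrite max_order_gt0 sum_order_gt0.
Qed.

Lemma psi_ge0 (G B : finGroupType) : 0 <= psi R G B.
Proof. by rewrite psiE divr_ge0 ?ler0n. Qed.

Lemma psi_le_order_ratio (p : nat) (G B : finGroupType) :
  prime p -> (p.-group [set: G])%g -> psi R G B <= #|B|%:R * order_ratio G.
Proof.
move=> p_pr pG; rewrite psiE /order_ratio mulrA -natrM.
apply: ler_nat_frac; rewrite ?muln_gt0 ?card_finGroup_gt0 ?card_ffun_finGroup_gt0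
  ?max_order_gt0 ?sum_order_gt0 //.
by have := sum_order_wreath_le B p_pr pG; nia.
Qed.

Lemma order_ratio_sqr_le (G : finGroupType) : order_ratio G ^+ 2 <= order_sq_ratio G.
Proof.
rewrite /order_ratio expr_div_n -!natrX; apply: ler_nat_frac.
- by rewrite expn_gt0 muln_gt0 card_finGroup_gt0 max_order_gt0.
- by rewrite muln_gt0 expn_gt0 card_finGroup_gt0 max_order_gt0.
have le_S2_NT := sqr_sum_le_card_sum_sqr (fun g : G => #[g]%g).
rewrite -/(sum_order G) -/(sum_order_sq G) in le_S2_NT.
rewrite [X in (_ <= X)%N](_ : _ = #|G| * sum_order_sq G * (#|G| * max_order G ^ 2))%N;
  last by ring.
by rewrite leq_mul2r le_S2_NT orbT.
Qed.

Lemma order_sq_ratio_le1 (G : finGroupType) : order_sq_ratio G <= 1.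
Proof.
rewrite ler_pdivrMr ?ltr0n ?muln_gt0 ?expn_gt0 ?card_finGroup_gt0 ?max_order_gt0 //.
rewrite mul1r ler_nat /sum_order_sq -sum_nat_const leq_sum // => g _.
by rewrite leq_exp2r // (leq_bigmax g).
Qed.

(* [p] and [p.-1 * p ^ 2] are the contributions of the fibers over [1] and over
   [x != 1] in [sum_order_sq_wreath_le]; [p ^ 3] is [#|'Z_p|] times the [p ^ 2]
   from [max_order_wreath_Zp_ge]. *)
Definition sq_ratio_factor (p : nat) : R := (p + p.-1 * p ^ 2)%:R / (p ^ 3)%:R.

Lemma sq_ratio_factor_ge0 p : 0 <= sq_ratio_factor p.
Proof. by rewrite divr_ge0 ?ler0n. Qed.

Lemma sq_ratio_factor_lt1 p : (1 < p)%N -> sq_ratio_factor p < 1.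
Proof.
move=> p_gt1; have p3_gt0 : (0 < p ^ 3)%N by rewrite expn_gt0 ltnW.
by rewrite ltr_pdivrMr ?ltr0n // mul1r ltr_nat; nia.
Qed.

Lemma order_sq_ratio_wreath_le p (G : finGroupType) :
  prime p -> (p.-group [set: G])%g ->
  order_sq_ratio (wreath G 'Z_p) <= sq_ratio_factor p * order_sq_ratio G.
Proof.
move=> p_pr pG; rewrite /order_sq_ratio mulf_div -!natrM card_prod card_Zp_prime //.
apply: ler_nat_frac.
- by rewrite !muln_gt0 card_ffun_finGroup_gt0 max_order_gt0 prime_gt0.
- by rewrite !muln_gt0 ?expn_gt0 card_finGroup_gt0 max_order_gt0 prime_gt0.
move: (sum_order_sq_wreath_le p_pr pG) (max_order_wreath_Zp_ge p_pr G).
set a := (p + p.-1 * p ^ 2)%N; set K := #|{ffun 'Z_p -> G}|; set N := #|G|.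
set T' := sum_order_sq (wreath G 'Z_p); set T := sum_order_sq G.
set M := max_order (wreath G 'Z_p); set m := max_order G => le_T le_m.
rewrite (_ : T' * (p ^ 3 * (N * m ^ 2)) = N * T' * (p * (p * m) ^ 2))%N; last by ring.
rewrite (_ : a * T * (K * p * M ^ 2) = a * K * T * (p * M ^ 2))%N; last by ring.
by rewrite leq_mul ?leq_pmul2l ?leq_exp2r ?prime_gt0.
Qed.

Lemma order_sq_ratio_iter_le p (A : finGroupType) n :
  prime p -> (p.-group [set: A])%g ->
  order_sq_ratio (iter_wreath p A n) <= sq_ratio_factor p ^+ n.
Proof.
move=> p_pr pA; elim: n => [|n IHn]; first exact: order_sq_ratio_le1.
apply: le_trans (order_sq_ratio_wreath_le p_pr (pgroup_iter_wreath p_pr n pA)) _.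
by rewrite exprS ler_wpM2l ?sq_ratio_factor_ge0.
Qed.

End Ratios.

Lemma order_ratio_iter_le (R : rcfType) p (A : finGroupType) n :
  prime p -> (p.-group [set: A])%g ->
  order_ratio R (iter_wreath p A n) <= Num.sqrt (sq_ratio_factor R p) ^+ n.
Proof.
move=> p_pr pA; rewrite -(@ler_pXn2r _ 2) ?nnegrE ?exprn_ge0 ?sqrtr_ge0 //; last first.
  by rewrite divr_ge0 ?ler0n.
rewrite -exprM mulnC exprM sqr_sqrtr ?sq_ratio_factor_ge0 //.
exact: le_trans (order_ratio_sqr_le _ _) (order_sq_ratio_iter_le _ _ p_pr pA).
Qed.

From mathcomp Require Import all_classical all_reals all_analysis.
Import numFieldNormedType.Exports.

Theorem corollary5p2 (R : realType) (p : nat) (A B : finGroupType) :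
  prime p ->
  (p.-group [set: A])%g -> [set: A] != 1%g ->
  (p.-group [set: B])%g -> [set: B] != 1%g ->
  ((fun n : nat => psi R (iter_wreath p A n) B) @ \oo --> (0 : R))%classic.
Proof.
move=> p_pr pA _ _ _.
set s := Num.sqrt (sq_ratio_factor R p).
have s_lt1 : `|s| < 1.
  by rewrite ger0_norm ?sqrtr_ge0 // -sqrtr1 ltr_sqrt ?sq_ratio_factor_lt1 ?prime_gt1.
have psi_le n : 0 <= psi R (iter_wreath p A n) B <= #|B|%:R * s ^+ n.
  have pAn := pgroup_iter_wreath p_pr n pA.
  rewrite psi_ge0 (le_trans (psi_le_order_ratio _ _ p_pr pAn)) //.
  by rewrite ler_wpM2l ?ler0n ?order_ratio_iter_le.
apply: (@squeeze_cvgr _ _ _ _ (fun=> 0) (fun n => #|B|%:R * s ^+ n)).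
- by near=> n; apply: psi_le.
- exact: cvg_cst.
- by rewrite -(mulr0 #|B|%:R); apply: cvgMl_tmp; apply: cvg_expr.
Unshelve. all: end_near.
Qed.
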